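(* Let $B>0$ be arbitrary, let $c>0$, and let $\epsilon^*(B)=\dfrac{c\,e^{-c/2}}{1+B}$. Let $\beta$ be Lipschitz on $[0,1]$ with $\|\beta\|_\infty\le B$, write $\bar\beta=\|\beta\|_\infty$, let $k=\mathcal{K}(\beta)$ be the exact backstepping kernel, and let $\hat k$ (a neural operator approximation $\hat{\mathcal K}(\beta)$) satisfy $|k(x)-\hat k(x)|<\epsilon$ for all $x\in[0,1]$ with $\epsilon\in(0,\epsilon^* )$. Then solutions of the closed-loop system $$u_t(x,t)=u_x(x,t)+\beta(x)u(0,t),\quad x\in[0,1],\qquad u(1,t)=\int_0^1\hat k(1-y)u(y,t)\,dy$$ satisfy $$\|u(t)\|\le M e^{-c^*t/2}\|u(0)\|\quad\forall t\ge0,$$ with $c^*=c-\frac{e^c}{c}\epsilon^2(1+B)^2>0$ and $$M=\Big(1+\big(\bar\beta+(1+\bar\beta)\epsilon\big)e^{(1+\bar\beta)\epsilon}\Big)\big(1+\bar\beta e^{\bar\beta}\big)e^{c/2}.$$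
   Context: The backstepping kernel operator $\mathcal{K}$ maps $\beta\in C^0[0,1]$ to the solution $k$ of $k(x)=-\beta(x)+\int_0^x\beta(x-y)k(y)\,dy$, $x\in[0,1]$. $\|\cdot\|_\infty$ is the supremum norm on $[0,1]$ and $\|u(t)\|$ is the $L^2[0,1]$ norm of $u(\cdot,t)$. *)

From Stdlib Require Import Reals.
From Coquelicot Require Import Coquelicot.
Open Scope R_scope.

Definition L2norm (f : R -> R) : R := sqrt (RInt (fun x => f x ^ 2) 0 1).

Definition lipschitz_on01 (beta : R -> R) : Prop :=
  exists L : R, forall x y, 0 <= x <= 1 -> 0 <= y <= 1 ->
    Rabs (beta x - beta y) <= L * Rabs (x - y).

Definition is_supnorm01 (f : R -> R) (s : R) : Prop :=
  (forall x, 0 <= x <= 1 -> Rabs (f x) <= s) /\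
  (forall b, (forall x, 0 <= x <= 1 -> Rabs (f x) <= b) -> s <= b).

(* k = K(beta): k is the continuous solution on [0,1] of
   k(x) = -beta(x) + int_0^x beta(x-y) k(y) dy (unique, so this determines k on [0,1]). *)
Definition is_backstepping_kernel (beta k : R -> R) : Prop :=
  (forall x, 0 <= x <= 1 -> continuous k x) /\
  (forall x, 0 <= x <= 1 ->
     k x = - beta x + RInt (fun y => beta (x - y) * k y) 0 x).

Definition is_closed_loop_solution (beta khat : R -> R) (u : R -> R -> R) : Prop :=
  (forall x t, 0 <= x <= 1 -> 0 <= t ->
     continuous (fun p : R * R => u (fst p) (snd p)) (x, t)) /\
  (forall x t, 0 < x < 1 -> 0 < t ->
     ex_derive (fun y => u y t) x /\
     ex_derive (fun s => u x s) t /\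
     continuous (fun p : R * R => Derive (fun y => u y (snd p)) (fst p)) (x, t) /\
     continuous (fun p : R * R => Derive (fun s => u (fst p) s) (snd p)) (x, t) /\
     Derive (fun s => u x s) t = Derive (fun y => u y t) x + beta x * u 0 t) /\
  (forall t, 0 <= t -> u 1 t = RInt (fun y => khat (1 - y) * u y t) 0 1).

From Stdlib Require Import Reals Lra.
From Coquelicot Require Import Coquelicot.
Open Scope R_scope.

(* Along characteristics the closed loop is a delay system for the boundary trace
   a(s) = u(0,s):  u(x,t) = a(t+x) - \int_0^x beta(x-r) a(t+r) dr.  Since k solves the kernel
   equation, inserting this into the boundary condition leaves
   a(t+1) = \int_0^1 (khat - k)(1-y) u(y,t) dy, hence a(t+1)^2 <= eps^2 (1+B)^2 \int_t^{t+1} a^2.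
   For this delay inequality an exponentially weighted energy of a on the window [t, t+1] is a
   Lyapunov functional, and \int_t^{t+1} a^2 decays at rate c* as soon as eps < eps*.  Finally
   ||u(t)||^2 and \int_t^{t+1} a^2 are equivalent: f |-> f - beta * f has norm at most 1 + betabar
   and, by Gronwall's inequality, its inverse has norm at most 1 + betabar e^betabar. *)

Lemma continuous_mult_R (f g : R -> R) (x : R) :
  continuous f x -> continuous g x -> continuous (fun y => f y * g y) x.
Proof. exact (continuous_mult f g x). Qed.

Lemma continuous_minus_R (f g : R -> R) (x : R) :
  continuous f x -> continuous g x -> continuous (fun y => f y - g y) x.
Proof. exact (continuous_minus f g x). Qed.

Lemma continuous_plus_R (f g : R -> R) (x : R) :
  continuous f x -> continuous g x -> continuous (fun y => f y + g y) x.
Proof. exact (continuous_plus f g x). Qed.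

Lemma continuous_Rsqr_comp (f : R -> R) (x : R) :
  continuous f x -> continuous (fun y => f y ^ 2) x.
Proof.
  intros Hf. apply (continuous_ext (fun y => f y * f y)); [intros y; simpl; now rewrite Rmult_1_r|].
  now apply continuous_mult_R.
Qed.

Lemma continuous_comp_sub_l (g : R -> R) (c x : R) :
  (forall y, continuous g y) -> continuous (fun y => g (c - y)) x.
Proof.
  intros Hg. apply (continuous_comp (fun y => c - y) g); [|apply Hg].
  apply continuous_minus_R; [apply continuous_const | apply continuous_id].
Qed.

Lemma continuous_comp_sub_r (g : R -> R) (c x : R) :
  (forall y, continuous g y) -> continuous (fun y => g (y - c)) x.
Proof.
  intros Hg. apply (continuous_comp (fun y => y - c) g); [|apply Hg].
  apply continuous_minus_R; [apply continuous_id | apply continuous_const].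
Qed.

Lemma continuous_comp_add_l (g : R -> R) (c x : R) :
  (forall y, continuous g y) -> continuous (fun y => g (c + y)) x.
Proof.
  intros Hg. apply (continuous_comp (fun y => c + y) g); [|apply Hg].
  apply continuous_plus_R; [apply continuous_const | apply continuous_id].
Qed.

Lemma continuous_of_Lipschitz (f : R -> R) (L x : R) :
  (forall y, Rabs (f y - f x) <= L * Rabs (y - x)) -> continuous f x.
Proof.
  intros HL. apply continuity_pt_filterlim. intros eps Heps.
  assert (HL1 : 0 < Rabs L + 1) by (pose proof (Rabs_pos L); lra).
  exists (eps / (Rabs L + 1)). split; [now apply Rdiv_lt_0_compat|].
  intros y [_ Hy]. simpl in *. unfold R_dist in *.
  apply Rle_lt_trans with ((Rabs L + 1) * Rabs (y - x)).
  - pose proof (Rle_abs L). pose proof (Rabs_pos (y - x)).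
    specialize (HL y). nra.
  - apply Rmult_lt_reg_l with (/ (Rabs L + 1)); [now apply Rinv_0_lt_compat|].
    rewrite <- Rmult_assoc, Rinv_l by lra. unfold Rdiv in Hy. lra.
Qed.

Definition continuous_on01 (f : R -> R) : Prop := forall x, 0 <= x <= 1 -> continuous f x.

(* Clamping to [0,1] extends functions given on [0,1] to R. *)
Definition clamp01 (x : R) : R := Rmax 0 (Rmin 1 x).

Lemma clamp01_in (x : R) : 0 <= clamp01 x <= 1.
Proof. unfold clamp01, Rmax, Rmin. repeat destruct Rle_dec; lra. Qed.

Lemma clamp01_id (x : R) : 0 <= x <= 1 -> clamp01 x = x.
Proof. intros. unfold clamp01, Rmax, Rmin. repeat destruct Rle_dec; lra. Qed.

Lemma clamp01_Lipschitz (x y : R) : Rabs (clamp01 y - clamp01 x) <= 1 * Rabs (y - x).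
Proof.
  rewrite Rmult_1_l. unfold clamp01, Rmax, Rmin.
  repeat destruct Rle_dec; unfold Rabs; repeat destruct Rcase_abs; lra.
Qed.

Lemma continuous_clamp01_comp (f : R -> R) :
  continuous_on01 f -> forall x, continuous (fun y => f (clamp01 y)) x.
Proof.
  intros Hf x. apply continuous_comp; [|apply Hf, clamp01_in].
  apply continuous_of_Lipschitz with 1. intros; apply clamp01_Lipschitz.
Qed.

Lemma lipschitz_on01_clamp01_continuous (f : R -> R) :
  lipschitz_on01 f -> forall x, continuous (fun y => f (clamp01 y)) x.
Proof.
  intros [L HL] x. apply continuous_of_Lipschitz with (Rabs L). intros y.
  eapply Rle_trans; [apply HL; apply clamp01_in|].
  pose proof (clamp01_Lipschitz x y). pose proof (Rle_abs L).
  pose proof (Rabs_pos L). pose proof (Rabs_pos (clamp01 y - clamp01 x)). nra.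
Qed.

Lemma RInt_minus_R (f g : R -> R) (a b : R) : ex_RInt f a b -> ex_RInt g a b ->
  RInt (fun x => f x - g x) a b = RInt f a b - RInt g a b.
Proof. exact (RInt_minus (V := R_CompleteNormedModule) f g a b). Qed.

Lemma RInt_plus_R (f g : R -> R) (a b : R) : ex_RInt f a b -> ex_RInt g a b ->
  RInt (fun x => f x + g x) a b = RInt f a b + RInt g a b.
Proof. exact (RInt_plus (V := R_CompleteNormedModule) f g a b). Qed.

Lemma RInt_scal_R (f : R -> R) (c a b : R) : ex_RInt f a b ->
  RInt (fun x => c * f x) a b = c * RInt f a b.
Proof. exact (RInt_scal (V := R_CompleteNormedModule) f a b c). Qed.

Lemma RInt_const_R (c a b : R) : RInt (fun _ => c) a b = (b - a) * c.
Proof. exact (RInt_const a b c). Qed.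

Lemma ex_RInt_of_continuous (g : R -> R) (a b : R) :
  (forall x, continuous g x) -> ex_RInt g a b.
Proof. intros Hg. apply (ex_RInt_continuous (V := R_CompleteNormedModule)); auto. Qed.

Lemma ex_RInt01 (f : R -> R) : continuous_on01 f -> ex_RInt f 0 1.
Proof.
  intros Hf. apply (ex_RInt_continuous (V := R_CompleteNormedModule)).
  rewrite Rmin_left, Rmax_right by lra. exact Hf.
Qed.

Lemma RInt_Chasles_R (g : R -> R) (a b c : R) :
  (forall x, continuous g x) -> RInt g a c = RInt g a b + RInt g b c.
Proof.
  intros Hg. symmetry.
  exact (RInt_Chasles (V := R_CompleteNormedModule) g a b c
           (ex_RInt_of_continuous g a b Hg) (ex_RInt_of_continuous g b c Hg)).
Qed.

Lemma is_derive_RInt_upper (g : R -> R) (a x : R) :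
  (forall y, continuous g y) -> is_derive (fun b => RInt g a b) x (g x).
Proof.
  intros Hg. apply is_derive_RInt with a; [|apply Hg].
  apply filter_forall. intros b. apply RInt_correct, ex_RInt_of_continuous, Hg.
Qed.

Lemma continuous_RInt_upper (g : R -> R) (a x : R) :
  (forall y, continuous g y) -> continuous (fun b => RInt g a b) x.
Proof.
  intros Hg. apply (ex_derive_continuous (K := R_AbsRing) (fun b => RInt g a b)).
  eexists. now apply is_derive_RInt_upper.
Qed.

Lemma is_derive_RInt_window (g : R -> R) (t : R) :
  (forall y, continuous g y) ->
  is_derive (fun s => RInt g s (s + 1)) t (g (t + 1) - g t).
Proof.
  intros Hg.
  apply (is_derive_ext (fun s => RInt g 0 (s + 1) - RInt g 0 s)).
  { intros s. simpl. rewrite (RInt_Chasles_R g 0 s (s + 1)) by exact Hg. ring. }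
  apply (is_derive_minus (fun s => RInt g 0 (s + 1)) (fun s => RInt g 0 s)).
  - rewrite <- (scal_one (g (t + 1))).
    apply (is_derive_comp (fun b => RInt g 0 b) (fun s => s + 1)).
    + now apply is_derive_RInt_upper.
    + auto_derive; auto; ring.
  - now apply is_derive_RInt_upper.
Qed.

Lemma MVT_open (f df : R -> R) (a b : R) : a < b ->
  (forall x, a <= x <= b -> continuous f x) ->
  (forall x, a < x < b -> is_derive f x (df x)) ->
  exists c, a < c < b /\ f b - f a = df c * (b - a).
Proof.
  intros Hab Hc Hd.
  set (pr := fun c (Hc : a < c < b) =>
    exist (fun l => derivable_pt_abs f c l) (df c)
      (proj1 (is_derive_Reals f c (df c)) (Hd c Hc))).
  destruct (MVT f id a b pr (fun c _ => derivable_pt_id c) Hab) as [c [Hcab Hmvt]].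
  - intros x Hx. apply continuity_pt_filterlim, Hc, Hx.
  - intros x _. apply derivable_continuous_pt, derivable_pt_id.
  - exists c. split; [exact Hcab|]. simpl in Hmvt. rewrite derive_pt_id in Hmvt.
    unfold id in Hmvt. lra.
Qed.

Lemma nonincreasing_of_derive_nonpos (G dG : R -> R) (a b : R) :
  (forall x, a <= x <= b -> continuous G x) ->
  (forall x, a < x < b -> is_derive G x (dG x)) ->
  (forall x, a < x < b -> dG x <= 0) ->
  forall x y, a <= x -> x <= y -> y <= b -> G y <= G x.
Proof.
  intros Hc Hd Hn x y Hx Hxy Hy.
  destruct (Req_dec x y) as [<-|Hne]; [lra|].
  destruct (MVT_open G dG x y) as [c [Hcxy Hmvt]];
    [lra | intros; apply Hc; lra | intros; apply Hd; lra |].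
  assert (dG c <= 0) by (apply Hn; lra). nra.
Qed.

Lemma nondecreasing_of_derive_nonneg (G dG : R -> R) (a b : R) :
  (forall x, a <= x <= b -> continuous G x) ->
  (forall x, a < x < b -> is_derive G x (dG x)) ->
  (forall x, a < x < b -> 0 <= dG x) ->
  forall x y, a <= x -> x <= y -> y <= b -> G x <= G y.
Proof.
  intros Hc Hd Hn x y Hx Hxy Hy.
  enough (- G y <= - G x) by lra.
  apply (nonincreasing_of_derive_nonpos (fun z => - G z) (fun z => - dG z) a b); auto.
  - intros z Hz. apply (continuous_opp G), Hc, Hz.
  - intros z Hz. apply (is_derive_opp G), Hd, Hz.
  - intros z Hz. specialize (Hn z Hz). lra.
Qed.

Lemma eq_of_derive_zero (G : R -> R) (a b : R) : a <= b ->
  (forall x, a <= x <= b -> continuous G x) ->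
  (forall x, a < x < b -> is_derive G x 0) -> G b = G a.
Proof.
  intros Hab Hc Hd. destruct (Req_dec a b) as [<-|Hne]; [reflexivity|].
  destruct (MVT_open G (fun _ => 0) a b) as [c [_ Hc']]; auto; lra.
Qed.

Lemma continuous_of_derive (G dG : R -> R) (x : R) : is_derive G x (dG x) -> continuous G x.
Proof. intros Hd. apply (ex_derive_continuous (K := R_AbsRing) G). now exists (dG x). Qed.

Lemma RInt_point_R (g : R -> R) (a : R) : RInt g a a = 0.
Proof. exact (RInt_point a g). Qed.

Lemma exp_le_exp (a b : R) : a <= b -> exp a <= exp b.
Proof. intros H. destruct (Req_dec a b) as [->|]; [lra | left; apply exp_increasing; lra]. Qed.

Lemma RInt_shift (g : R -> R) (t : R) : (forall x, continuous g x) ->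
  RInt (fun x => g (t + x)) 0 1 = RInt g t (t + 1).
Proof.
  intros Hg.
  assert (H := RInt_comp_lin g 1 t 0 1 (ex_RInt_of_continuous g _ _ Hg)).
  replace (1 * 0 + t) with t in H by ring. replace (1 * 1 + t) with (t + 1) in H by ring.
  rewrite <- H. apply RInt_ext. intros x _.
  unfold scal; simpl; unfold mult; simpl. rewrite Rmult_1_l. f_equal. ring.
Qed.

Lemma exp_half_sq (a : R) : exp (a / 2) ^ 2 = exp a.
Proof. simpl. rewrite Rmult_1_r, <- exp_plus. f_equal. field. Qed.

(** * Differentiation along characteristics *)

Lemma differentiable_pt_lim_of_partials (f : R -> R -> R) (x y : R) :
  locally_2d (fun u v => ex_derive (fun z => f z v) u) x y ->
  ex_derive (fun z => f x z) y ->
  continuity_2d_pt (fun u v => Derive (fun z => f z v) u) x y ->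
  differentiable_pt_lim f x y (Derive (fun z => f z y) x) (Derive (fun z => f x z) y).
Proof.
  intros [d1 Hd1] [ly Hly] Hc.
  replace (Derive (fun z => f x z) y) with ly by (symmetry; now apply is_derive_unique).
  set (lx := Derive (fun z => f z y) x). intros eps.
  destruct (Hc (pos_div_2 eps)) as [d2 Hd2]. simpl in Hd2.
  apply is_derive_Reals in Hly.
  destruct (Hly (eps / 2)) as [d3 Hd3]; [destruct eps; simpl; lra|].
  assert (Hd : 0 < Rmin d1 (Rmin d2 d3)) by (destruct d1, d2, d3; simpl; repeat apply Rmin_pos; auto).
  exists (mkposreal _ Hd). simpl. intros u v Hu Hv.
  pose proof (Rmin_l d1 (Rmin d2 d3)). pose proof (Rmin_r d1 (Rmin d2 d3)).
  pose proof (Rmin_l d2 d3). pose proof (Rmin_r d2 d3).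
  assert (Sx : Rabs (f u v - f x v - lx * (u - x)) <= eps / 2 * Rabs (u - x)).
  { replace (f u v - f x v - lx * (u - x)) with ((f u v - lx * u) - (f x v - lx * x)) by ring.
    apply (bounded_variation (fun z => f z v - lx * z) (fun z => Derive (fun z => f z v) z - lx)).
    intros z Hz. split.
    - apply (is_derive_minus (fun z => f z v) (fun z => lx * z)).
      + apply Derive_correct, Hd1; lra.
      + auto_derive; auto; ring.
    - left. apply Hd2; lra. }
  assert (Sy : Rabs (f x v - f x y - ly * (v - y)) <= eps / 2 * Rabs (v - y)).
  { destruct (Req_dec v y) as [->|Hne].
    - rewrite !Rminus_diag, Rmult_0_r, Rminus_0_r, !Rabs_R0. lra.
    - specialize (Hd3 (v - y) ltac:(lra) ltac:(lra)).
      replace (y + (v - y)) with v in Hd3 by ring.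
      replace (f x v - f x y - ly * (v - y)) with (((f x v - f x y) / (v - y) - ly) * (v - y))
        by (field; lra).
      rewrite Rabs_mult. apply Rmult_le_compat_r; [apply Rabs_pos | lra]. }
  replace (f u v - f x y - (lx * (u - x) + ly * (v - y)))
    with ((f u v - f x v - lx * (u - x)) + (f x v - f x y - ly * (v - y))) by ring.
  eapply Rle_trans; [apply Rabs_triang|].
  pose proof (Rmax_l (Rabs (u - x)) (Rabs (v - y))).
  pose proof (Rmax_r (Rabs (u - x)) (Rabs (v - y))).
  destruct eps as [e He]; simpl in *. nra.
Qed.

Lemma locally_2d_of_open_strip (P : R -> R -> Prop) (x t : R) :
  0 < x < 1 -> 0 < t -> (forall p q, 0 < p < 1 -> 0 < q -> P p q) -> locally_2d P x t.
Proof.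
  intros Hx Ht HP.
  assert (Hd : 0 < Rmin x (Rmin (1 - x) t)) by (repeat apply Rmin_pos; lra).
  exists (mkposreal _ Hd). simpl. intros p q Hp Hq. apply HP.
  - pose proof (Rmin_l x (Rmin (1 - x) t)). pose proof (Rmin_r x (Rmin (1 - x) t)).
    pose proof (Rmin_l (1 - x) t). apply Rabs_lt_between' in Hp. lra.
  - pose proof (Rmin_r x (Rmin (1 - x) t)). pose proof (Rmin_r (1 - x) t).
    apply Rabs_lt_between' in Hq. lra.
Qed.

(* Along the characteristic [x = x0 - s, t = t0 + s] the transport term cancels. *)
Lemma is_derive_along_characteristic (beta khat : R -> R) (u : R -> R -> R) (x0 t0 s : R) :
  is_closed_loop_solution beta khat u -> 0 < x0 - s < 1 -> 0 < t0 + s ->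
  is_derive (fun s => u (x0 - s) (t0 + s)) s (beta (x0 - s) * u 0 (t0 + s)).
Proof.
  intros [_ [Hpde _]] Hx Ht.
  destruct (Hpde _ _ Hx Ht) as [_ [Hdt [Hcx [_ Heq]]]].
  assert (Hdiff : differentiable_pt_lim u (x0 - s) (t0 + s)
            (Derive (fun z => u z (t0 + s)) (x0 - s)) (Derive (fun z => u (x0 - s) z) (t0 + s))).
  { apply differentiable_pt_lim_of_partials; [| exact Hdt | apply continuity_2d_pt_filterlim, Hcx].
    apply locally_2d_of_open_strip; [exact Hx | exact Ht |].
    intros p q Hp Hq. apply (Hpde p q Hp Hq). }
  assert (Hcomp := derivable_pt_lim_comp_2d u (fun s => x0 - s) (fun s => t0 + s) s _ _ (-1) 1 Hdiff).
  apply is_derive_Reals. replace (beta (x0 - s) * u 0 (t0 + s))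
    with (Derive (fun z => u z (t0 + s)) (x0 - s) * -1 + Derive (fun z => u (x0 - s) z) (t0 + s) * 1)
    by (rewrite Heq; ring).
  apply Hcomp; apply is_derive_Reals; auto_derive; auto; ring.
Qed.

(** * Parametric integrals and Fubini on a triangle *)

Lemma abs_RInt_le_const_unordered (f : R -> R) (a b M : R) : ex_RInt f a b ->
  (forall t, Rmin a b <= t <= Rmax a b -> Rabs (f t) <= M) ->
  Rabs (RInt f a b) <= Rabs (b - a) * M.
Proof.
  intros Hex H. destruct (Rle_dec a b) as [Hab|Hab].
  - rewrite (Rabs_right (b - a)) by lra. apply abs_RInt_le_const; auto.
    intros t Ht. apply H. rewrite Rmin_left, Rmax_right; lra.
  - rewrite <- opp_RInt_swap by now apply ex_RInt_swap. unfold opp; simpl. rewrite Rabs_Ropp.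
    rewrite (Rabs_left (b - a)) by lra. replace (- (b - a)) with (a - b) by ring.
    apply abs_RInt_le_const; [lra | now apply ex_RInt_swap |].
    intros t Ht. apply H. rewrite Rmin_right, Rmax_left; lra.
Qed.

Section ParametricIntegral.

Variable h : R -> R -> R.
Hypothesis h_cont : forall y p, continuity_2d_pt h y p.

Lemma continuous_slice_l (p y : R) : continuous (fun y => h y p) y.
Proof.
  apply (continuous_comp_2 (fun y => y) (fun _ => p) h);
    [apply continuous_id | apply continuous_const | apply continuity_2d_pt_filterlim, h_cont].
Qed.

Lemma continuous_slice_r (y p : R) : continuous (fun p => h y p) p.
Proof.
  apply (continuous_comp_2 (fun _ => y) (fun p => p) h);
    [apply continuous_const | apply continuous_id | apply continuity_2d_pt_filterlim, h_cont].
Qed.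

Lemma ex_RInt_slice (p a b : R) : ex_RInt (fun y => h y p) a b.
Proof. apply ex_RInt_of_continuous. intros; apply continuous_slice_l. Qed.

Lemma RInt_param_uniform (a b p0 : R) (e : posreal) : exists d : posreal,
  forall p, Rabs (p - p0) < d ->
    Rabs (RInt (fun y => h y p) a b - RInt (fun y => h y p0) a b) <= e.
Proof.
  assert (He : 0 < e / (Rabs (b - a) + 1)).
  { apply Rdiv_lt_0_compat; [apply cond_pos | pose proof (Rabs_pos (b - a)); lra]. }
  destruct (uniform_continuity_2d_1d h (Rmin a b) (Rmax a b) p0 (fun y _ => h_cont y p0)
              (mkposreal _ He)) as [d Hd].
  exists d. intros p Hp. simpl in Hd.
  rewrite <- RInt_minus_R by apply ex_RInt_slice.
  eapply Rle_trans.
  - apply abs_RInt_le_const_unordered.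
    + apply (ex_RInt_minus (V := R_NormedModule)); apply ex_RInt_slice.
    + intros t Ht. left. apply Hd; auto; try (apply Rabs_lt_between' in Hp; lra).
      rewrite Rminus_diag, Rabs_R0. apply cond_pos.
  - pose proof (Rabs_pos (b - a)). destruct e as [e' He']. simpl in *.
    rewrite Rmult_comm. apply Rle_trans with (e' / (Rabs (b - a) + 1) * (Rabs (b - a) + 1)).
    + apply Rmult_le_compat_l; lra.
    + right. field. lra.
Qed.

Lemma continuity_2d_pt_RInt_param (s0 p0 : R) :
  continuity_2d_pt (fun s p => RInt (fun y => h y p) 0 s) s0 p0.
Proof.
  intros eps.
  destruct (h_cont s0 p0 (mkposreal 1 Rlt_0_1)) as [d1 Hd1]. simpl in Hd1.
  set (Mb := Rabs (h s0 p0) + 1).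
  assert (HMb : 0 < Mb) by (unfold Mb; pose proof (Rabs_pos (h s0 p0)); lra).
  destruct (RInt_param_uniform 0 s0 p0 (pos_div_2 eps)) as [d2 Hd2]. simpl in Hd2.
  assert (He : 0 < eps / (2 * Mb)) by (destruct eps; simpl; apply Rdiv_lt_0_compat; lra).
  assert (Hd : 0 < Rmin d1 (Rmin d2 (eps / (2 * Mb)))).
  { destruct d1, d2; simpl. repeat apply Rmin_pos; auto. }
  exists (mkposreal _ Hd). simpl. intros s p Hs Hp.
  pose proof (Rmin_l d1 (Rmin d2 (eps / (2 * Mb)))).
  pose proof (Rmin_r d1 (Rmin d2 (eps / (2 * Mb)))).
  pose proof (Rmin_l d2 (eps / (2 * Mb))). pose proof (Rmin_r d2 (eps / (2 * Mb))).
  rewrite <- (RInt_Chasles (fun y => h y p) 0 s0 s) by apply ex_RInt_slice.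
  unfold plus; simpl.
  assert (Htail : Rabs (RInt (fun y => h y p) s0 s) <= Rabs (s - s0) * Mb).
  { apply abs_RInt_le_const_unordered; [apply ex_RInt_slice|]. intros t Ht.
    assert (Rabs (t - s0) < d1).
    { apply Rle_lt_trans with (Rabs (s - s0)); [|lra].
      unfold Rmin, Rmax in Ht; destruct Rle_dec in Ht;
        unfold Rabs; repeat destruct Rcase_abs; lra. }
    specialize (Hd1 t p ltac:(lra) ltac:(lra)).
    pose proof (Rabs_triang_inv (h t p) (h s0 p0)). unfold Mb. lra. }
  specialize (Hd2 p ltac:(lra)).
  assert (Rabs (s - s0) * Mb < eps / 2).
  { apply Rlt_le_trans with (eps / (2 * Mb) * Mb);
      [apply Rmult_lt_compat_r; lra | right; field; lra]. }
  replace (RInt (fun y => h y p) 0 s0 + RInt (fun y => h y p) s0 s - RInt (fun y => h y p0) 0 s0)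
    with (RInt (fun y => h y p) s0 s + (RInt (fun y => h y p) 0 s0 - RInt (fun y => h y p0) 0 s0))
    by ring.
  eapply Rle_lt_trans; [apply Rabs_triang|]. destruct eps; simpl in *. lra.
Qed.

Lemma continuous_RInt_diag (x : R) : continuous (fun x => RInt (fun y => h y x) 0 x) x.
Proof.
  apply (continuous_comp_2 (fun x => x) (fun x => x) (fun s p => RInt (fun y => h y p) 0 s));
    [apply continuous_id | apply continuous_id |].
  apply (continuity_2d_pt_filterlim (fun s p => RInt (fun y => h y p) 0 s)).
  apply continuity_2d_pt_RInt_param.
Qed.

End ParametricIntegral.

Definition conv (b f : R -> R) (x : R) : R := RInt (fun r => b (x - r) * f r) 0 x.

Lemma continuity_2d_pt_of_continuous (F : R -> R -> R) :
  (forall z : R * R, continuous (fun z : R * R => F (fst z) (snd z)) z) ->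
  forall s p, continuity_2d_pt F s p.
Proof. intros H s p. apply continuity_2d_pt_filterlim, (H (s, p)). Qed.

Lemma continuous_conv (b f : R -> R) :
  (forall x, continuous b x) -> (forall x, continuous f x) -> forall x, continuous (conv b f) x.
Proof.
  intros Hb Hf. apply (continuous_RInt_diag (fun r x => b (x - r) * f r)).
  apply continuity_2d_pt_of_continuous. intros z.
  apply (continuous_mult (fun z : R * R => b (snd z - fst z)) (fun z : R * R => f (fst z))).
  - apply (continuous_comp (fun z : R * R => snd z - fst z) b); [|apply Hb].
    apply (continuous_minus (fun z : R * R => snd z) (fun z : R * R => fst z));
      destruct z; [apply continuous_snd | apply continuous_fst].
  - apply (continuous_comp (fun z : R * R => fst z) f); [destruct z; apply continuous_fst | apply Hf].
Qed.

Lemma continuity_2d_pt_diag_snd (Q : R -> R -> R) :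
  (forall s p, continuity_2d_pt Q s p) -> forall X r, continuity_2d_pt (fun _ r => Q r r) X r.
Proof.
  intros HQ X r. apply continuity_2d_pt_filterlim.
  apply (continuous_comp_2 (fun z : R * R => snd z) (fun z : R * R => snd z) Q);
    [apply continuous_snd | apply continuous_snd | apply continuity_2d_pt_filterlim, HQ].
Qed.

Section TriangleFubini.

Variable h : R -> R -> R.
Hypothesis h_cont : forall y p, continuity_2d_pt h y p.

Lemma continuity_2d_pt_RInt_tail (X r : R) :
  continuity_2d_pt (fun X r => RInt (fun y => h y r) r X) X r.
Proof.
  assert (HQ := continuity_2d_pt_RInt_param h h_cont).
  apply (continuity_2d_pt_ext (fun X r => RInt (fun y => h y r) 0 X - RInt (fun y => h y r) 0 r)).
  { intros X' r'.
    rewrite (RInt_Chasles_R (fun y => h y r') 0 r' X') by apply continuous_slice_l, h_cont. ring. }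
  apply continuity_2d_pt_minus; [apply HQ|].
  apply (continuity_2d_pt_diag_snd (fun s p => RInt (fun y => h y p) 0 s) HQ).
Qed.

Lemma is_derive_RInt_triangle (X : R) :
  is_derive (fun X => RInt (fun r => RInt (fun y => h y r) r X) 0 X) X (RInt (fun r => h X r) 0 X).
Proof.
  set (f := fun X r => RInt (fun y => h y r) r X).
  assert (Hfd : forall X r, is_derive (fun z => f z r) X (h X r)).
  { intros X' r. apply (is_derive_RInt_upper (fun y => h y r) r X').
    intros; apply continuous_slice_l, h_cont. }
  assert (HDf : forall x t, continuity_2d_pt (fun u v => Derive (fun z => f z v) u) x t).
  { intros x t. apply (continuity_2d_pt_ext h); [|apply h_cont].
    intros; symmetry; apply is_derive_unique, Hfd. }
  assert (Hfex : forall X a b, ex_RInt (fun r => f X r) a b).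
  { intros X' a b. apply ex_RInt_of_continuous. intros r.
    apply (continuous_slice_r (fun X r => f X r)), continuity_2d_pt_RInt_tail. }
  assert (Hfc : forall r, continuity_pt (fun r => f X r) r).
  { intros r. apply continuity_pt_filterlim.
    apply (continuous_slice_r (fun X r => f X r)), continuity_2d_pt_RInt_tail. }
  assert (Hd := is_derive_RInt_param_bound_comp f (fun _ => 0) (fun X => X) X 0 1).
  replace (RInt (fun r => h X r) 0 X)
    with (RInt (fun t => Derive (fun u => f u t) X) 0 X + - f X 0 * 0 + f X X * 1).
  - apply Hd.
    + apply filter_forall; intros; apply Hfex.
    + exists (mkposreal 1 Rlt_0_1). apply filter_forall; intros; apply Hfex.
    + exists (mkposreal 1 Rlt_0_1). apply filter_forall; intros; apply Hfex.
    + auto_derive; auto.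
    + auto_derive; auto.
    + exists (mkposreal 1 Rlt_0_1). apply filter_forall; intros. eexists. apply Hfd.
    + intros; apply HDf.
    + exists (mkposreal 1 Rlt_0_1). intros; apply HDf.
    + exists (mkposreal 1 Rlt_0_1). intros; apply HDf.
    + apply Hfc.
    + apply Hfc.
  - replace (f X X) with 0 by (symmetry; apply RInt_point_R).
    rewrite (RInt_ext _ (fun r => h X r)) by (intros; apply is_derive_unique, Hfd). ring.
Qed.

Lemma RInt_triangle_swap (X : R) : 0 <= X ->
  RInt (fun y => RInt (fun r => h y r) 0 y) 0 X = RInt (fun r => RInt (fun y => h y r) r X) 0 X.
Proof.
  intros HX.
  assert (Hdiag : forall y, continuous (fun y => RInt (fun r => h y r) 0 y) y).
  { apply (continuous_RInt_diag (fun r y => h y r)). intros r y.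
    apply continuity_2d_pt_filterlim.
    apply (continuous_comp_2 (fun z : R * R => snd z) (fun z : R * R => fst z) h);
      [apply continuous_snd | apply continuous_fst | apply continuity_2d_pt_filterlim, h_cont]. }
  set (D := fun X => RInt (fun y => RInt (fun r => h y r) 0 y) 0 X
                     - RInt (fun r => RInt (fun y => h y r) r X) 0 X).
  assert (HD : forall X, is_derive D X 0).
  { intros X'. rewrite <- (Rminus_diag (RInt (fun r => h X' r) 0 X')).
    apply (is_derive_minus (fun X => RInt (fun y => RInt (fun r => h y r) 0 y) 0 X)).
    - exact (is_derive_RInt_upper (fun y => RInt (fun r => h y r) 0 y) 0 X' Hdiag).
    - apply is_derive_RInt_triangle. }
  assert (D X = D 0).
  { apply eq_of_derive_zero; auto. intros x _. now apply (continuous_of_derive D (fun _ => 0)). }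
  unfold D in *. rewrite !RInt_point_R in *. lra.
Qed.

End TriangleFubini.

(** * The kernel equation *)

Lemma RInt_reflect (g : R -> R) (a b : R) : (forall x, continuous g x) ->
  RInt (fun y => g (1 - y)) a b = RInt g (1 - b) (1 - a).
Proof.
  intros Hg.
  assert (Hex : forall a b, ex_RInt g a b) by (intros; now apply ex_RInt_of_continuous).
  rewrite <- (opp_RInt_swap g (1 - a) (1 - b)) by apply Hex.
  replace (1 - a) with (-1 * a + 1) by ring. replace (1 - b) with (-1 * b + 1) by ring.
  rewrite <- (RInt_comp_lin g (-1) 1 a b (Hex _ _)).
  rewrite RInt_scal.
  2: { apply ex_RInt_of_continuous. intros x.
       apply (continuous_comp (fun y => -1 * y + 1) g); [|apply Hg].
       apply (continuous_plus_R (fun y => -1 * y) (fun _ => 1)); [|apply continuous_const].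
       apply continuous_mult_R; [apply continuous_const | apply continuous_id]. }
  rewrite (RInt_ext (fun y => g (-1 * y + 1)) (fun y => g (1 - y))) by (intros; f_equal; ring).
  assert (E : forall x : R, x = opp (scal (-1) x)).
  { intros. unfold opp, scal; simpl; unfold mult; simpl. ring. }
  apply E.
Qed.

Lemma backstepping_kernel_extension (beta k be ke : R -> R) :
  is_backstepping_kernel beta k ->
  (forall x, 0 <= x <= 1 -> be x = beta x) -> (forall x, 0 <= x <= 1 -> ke x = k x) ->
  forall x, 0 <= x <= 1 -> ke x = - be x + RInt (fun y => be (x - y) * ke y) 0 x.
Proof.
  intros [_ Hk] Hbe Hke x Hx.
  rewrite Hke, Hbe, Hk by exact Hx. f_equal.
  apply RInt_ext. rewrite Rmin_left, Rmax_right by lra. intros y Hy.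
  rewrite Hbe, Hke by lra. reflexivity.
Qed.

Section KernelIdentity.

Variables (b kk : R -> R).
Hypotheses (b_cont : forall x, continuous b x) (kk_cont : forall x, continuous kk x).
Hypothesis kk_kernel : forall x, 0 <= x <= 1 -> kk x = - b x + RInt (fun y => b (x - y) * kk y) 0 x.

Lemma RInt_kernel_tail (r : R) : 0 <= r <= 1 ->
  RInt (fun y => kk (1 - y) * b (y - r)) r 1 = kk (1 - r) + b (1 - r).
Proof.
  intros Hr.
  assert (Href := RInt_reflect (fun z => kk z * b (1 - r - z)) r 1).
  replace (1 - 1) with 0 in Href by ring.
  transitivity (RInt (fun z => kk z * b (1 - r - z)) 0 (1 - r)).
  { rewrite <- Href.
    - apply RInt_ext. intros y _. do 2 f_equal. ring.
    - intros x. apply continuous_mult_R; [apply kk_cont | now apply continuous_comp_sub_l]. }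
  rewrite (kk_kernel (1 - r)) by lra.
  rewrite (RInt_ext (fun z => kk z * b (1 - r - z)) (fun y => b (1 - r - y) * kk y))
    by (intros; apply Rmult_comm).
  lra.
Qed.

Lemma RInt_kernel_conv (f : R -> R) : (forall x, continuous f x) ->
  RInt (fun y => kk (1 - y) * conv b f y) 0 1 = RInt (fun r => (kk (1 - r) + b (1 - r)) * f r) 0 1.
Proof.
  intros Hf.
  set (h := fun y r => kk (1 - y) * (b (y - r) * f r)).
  assert (Hh : forall y r, continuity_2d_pt h y r).
  { apply continuity_2d_pt_of_continuous. intros z. unfold h.
    apply (continuous_mult (fun z : R * R => kk (1 - fst z))
                           (fun z : R * R => b (fst z - snd z) * f (snd z))).
    - apply (continuous_comp (fun z : R * R => 1 - fst z) kk); [|apply kk_cont].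
      apply (continuous_minus (fun _ : R * R => 1) (fun z : R * R => fst z));
        [apply continuous_const | destruct z; apply continuous_fst].
    - apply (continuous_mult (fun z : R * R => b (fst z - snd z)) (fun z : R * R => f (snd z))).
      + apply (continuous_comp (fun z : R * R => fst z - snd z) b); [|apply b_cont].
        apply (continuous_minus (fun z : R * R => fst z) (fun z : R * R => snd z));
          destruct z; [apply continuous_fst | apply continuous_snd].
      + apply (continuous_comp (fun z : R * R => snd z) f);
          [destruct z; apply continuous_snd | apply Hf]. }
  transitivity (RInt (fun y => RInt (fun r => h y r) 0 y) 0 1).
  { apply RInt_ext. intros y _. unfold conv, h. rewrite RInt_scal_R; [reflexivity|].
    apply ex_RInt_of_continuous. intros x.
    apply continuous_mult_R; [now apply continuous_comp_sub_l | apply Hf]. }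
  rewrite (RInt_triangle_swap h Hh 1) by lra.
  apply RInt_ext. rewrite Rmin_left, Rmax_right by lra. intros r Hr. unfold h.
  rewrite <- RInt_kernel_tail by lra.
  rewrite (RInt_ext _ (fun y => f r * (kk (1 - y) * b (y - r)))) by (intros; simpl; ring).
  rewrite RInt_scal_R; [simpl; ring|].
  apply ex_RInt_of_continuous. intros x.
  apply continuous_mult_R; [now apply continuous_comp_sub_l | now apply continuous_comp_sub_r].
Qed.

End KernelIdentity.

(** * The closed loop as a delay system *)

(* The boundary value [u(0, s)], continued by [u(0, 0)] for [s < 0] so that it is continuous
   on R. *)
Definition left_trace (u : R -> R -> R) (s : R) : R := u 0 (Rmax 0 s).

Section ClosedLoop.

Variables (beta k khat be ke : R -> R) (u : R -> R -> R).
Hypothesis u_sol : is_closed_loop_solution beta khat u.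
Hypotheses (be_cont : forall x, continuous be x) (be_eq : forall x, 0 <= x <= 1 -> be x = beta x).

Lemma continuous_u (x t : R) : 0 <= x <= 1 -> 0 <= t ->
  continuous (fun z : R * R => u (fst z) (snd z)) (x, t).
Proof. destruct u_sol as [Hc _]. apply Hc. Qed.

Lemma continuous_u_slice (t x : R) : 0 <= t -> 0 <= x <= 1 -> continuous (fun y => u y t) x.
Proof.
  intros Ht Hx. apply (continuous_comp_2 (fun y => y) (fun _ => t) u);
    [apply continuous_id | apply continuous_const | now apply continuous_u].
Qed.

Lemma continuous_left_trace (s : R) : continuous (left_trace u) s.
Proof.
  apply (continuous_comp_2 (fun _ => 0) (fun s => Rmax 0 s) u); [apply continuous_const | |].
  - apply continuous_of_Lipschitz with 1. intros y. rewrite Rmult_1_l.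
    unfold Rmax. repeat destruct Rle_dec; unfold Rabs; repeat destruct Rcase_abs; lra.
  - apply continuous_u; [lra | apply Rmax_l].
Qed.

Lemma continuous_left_trace_shift (t s : R) : continuous (fun s => left_trace u (t + s)) s.
Proof. apply continuous_comp_add_l, continuous_left_trace. Qed.

Lemma closed_loop_characteristic (x t : R) : 0 <= x <= 1 -> 0 <= t ->
  u x t = left_trace u (t + x) - conv be (fun s => left_trace u (t + s)) x.
Proof.
  intros Hx Ht.
  assert (Hg : forall r, continuous (fun r => be (x - r) * left_trace u (t + r)) r).
  { intros r. apply continuous_mult_R;
      [now apply continuous_comp_sub_l | apply continuous_left_trace_shift]. }
  assert (Hpsi : u (x - x) (t + x) - RInt (fun r => be (x - r) * left_trace u (t + r)) 0 x
               = u (x - 0) (t + 0) - RInt (fun r => be (x - r) * left_trace u (t + r)) 0 0).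
  { apply (eq_of_derive_zero
             (fun s => u (x - s) (t + s) - RInt (fun r => be (x - r) * left_trace u (t + r)) 0 s));
      [lra | |].
    - intros s Hs. apply continuous_minus_R; [|now apply continuous_RInt_upper].
      apply (continuous_comp_2 (fun s => x - s) (fun s => t + s) u).
      + apply continuous_minus_R; [apply continuous_const | apply continuous_id].
      + apply continuous_plus_R; [apply continuous_const | apply continuous_id].
      + apply continuous_u; lra.
    - intros s Hs. replace 0 with (beta (x - s) * u 0 (t + s)
                                   - be (x - s) * left_trace u (t + s)) at 1.
      + apply (is_derive_minus (fun s => u (x - s) (t + s))).
        * apply (is_derive_along_characteristic beta khat); [exact u_sol | lra | lra].
        * exact (is_derive_RInt_upper (fun r => be (x - r) * left_trace u (t + r)) 0 s Hg).
      + unfold left_trace. rewrite be_eq, Rmax_right by lra. ring. }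
  rewrite Rminus_diag, Rminus_0_r, Rplus_0_r, RInt_point_R in Hpsi.
  unfold conv. replace (u 0 (t + x)) with (left_trace u (t + x)) in Hpsi
    by (unfold left_trace; rewrite Rmax_right by lra; reflexivity).
  lra.
Qed.

Hypotheses (ke_cont : forall x, continuous ke x) (ke_eq : forall x, 0 <= x <= 1 -> ke x = k x).
Hypothesis k_kernel : is_backstepping_kernel beta k.

Lemma RInt_kernel_solution (t : R) : 0 <= t ->
  RInt (fun y => k (1 - y) * u y t) 0 1 = - conv be (fun s => left_trace u (t + s)) 1.
Proof.
  intros Ht.
  set (fa := fun s => left_trace u (t + s)).
  assert (Hfa : forall s, continuous fa s) by apply continuous_left_trace_shift.
  assert (Hke1 : forall y, continuous (fun y => ke (1 - y)) y)
    by (intros; now apply continuous_comp_sub_l).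
  rewrite (RInt_ext _ (fun y => ke (1 - y) * fa y - ke (1 - y) * conv be fa y)).
  2: { rewrite Rmin_left, Rmax_right by lra. intros y Hy.
       rewrite ke_eq, (closed_loop_characteristic y t) by lra. unfold fa; simpl; ring. }
  rewrite RInt_minus_R by (apply ex_RInt_of_continuous; intros;
    apply continuous_mult_R; [apply Hke1 | auto using continuous_conv]).
  rewrite (RInt_kernel_conv be ke) by
    (auto; apply backstepping_kernel_extension with beta k; auto).
  rewrite (RInt_ext (fun r => (ke (1 - r) + be (1 - r)) * fa r)
                    (fun r => ke (1 - r) * fa r + be (1 - r) * fa r)) by (intros; simpl; ring).
  rewrite RInt_plus_R by (apply ex_RInt_of_continuous; intros;
    apply continuous_mult_R; [auto using continuous_comp_sub_l | apply Hfa]).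
  unfold conv. lra.
Qed.

Hypothesis khat_cont : continuous_on01 khat.

Lemma closed_loop_delay_identity (t : R) : 0 <= t ->
  left_trace u (t + 1) = RInt (fun y => (khat (1 - y) - k (1 - y)) * u y t) 0 1.
Proof.
  intros Ht.
  assert (Hex : forall g : R -> R, continuous_on01 g -> ex_RInt (fun y => g (1 - y) * u y t) 0 1).
  { intros g Hg. apply ex_RInt01. intros y Hy. apply continuous_mult_R.
    - apply (continuous_comp (fun y => 1 - y) g);
        [apply continuous_minus_R; [apply continuous_const | apply continuous_id] | apply Hg; lra].
    - now apply continuous_u_slice. }
  rewrite (RInt_ext _ (fun y => khat (1 - y) * u y t - k (1 - y) * u y t)) by (intros; simpl; ring).
  rewrite RInt_minus_R by (apply Hex; first [exact khat_cont | exact (proj1 k_kernel)]).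
  rewrite RInt_kernel_solution by exact Ht.
  destruct u_sol as [_ [_ Hbc]]. rewrite <- (Hbc t Ht).
  rewrite (closed_loop_characteristic 1 t) by lra. ring.
Qed.

End ClosedLoop.

(** * L2 bounds for Volterra operators *)

Lemma continuous_on01_abs (f : R -> R) : continuous_on01 f -> continuous_on01 (fun x => Rabs (f x)).
Proof. intros Hf x Hx. apply continuous_Rabs_comp, Hf, Hx. Qed.

Lemma continuous_on01_sqr (f : R -> R) : continuous_on01 f -> continuous_on01 (fun x => f x ^ 2).
Proof. intros Hf x Hx. apply continuous_Rsqr_comp, Hf, Hx. Qed.

Lemma RInt01_le (f g : R -> R) : continuous_on01 f -> continuous_on01 g ->
  (forall x, 0 <= x <= 1 -> f x <= g x) -> RInt f 0 1 <= RInt g 0 1.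
Proof.
  intros Hf Hg Hfg. apply RInt_le; [lra | now apply ex_RInt01 | now apply ex_RInt01 |].
  intros; apply Hfg; lra.
Qed.

Lemma RInt01_ge0 (f : R -> R) : continuous_on01 f ->
  (forall x, 0 <= x <= 1 -> 0 <= f x) -> 0 <= RInt f 0 1.
Proof.
  intros Hf Hpos. apply RInt_ge_0; [lra | now apply ex_RInt01 |]. intros; apply Hpos; lra.
Qed.

Lemma sqr_RInt01_abs_le (f : R -> R) : continuous_on01 f ->
  (RInt (fun x => Rabs (f x)) 0 1) ^ 2 <= RInt (fun x => f x ^ 2) 0 1.
Proof.
  intros Hf. set (m := RInt (fun x => Rabs (f x)) 0 1).
  assert (Hsq := continuous_on01_sqr f Hf). assert (Habs := continuous_on01_abs f Hf).
  assert (Hvar : 0 <= RInt (fun x => f x ^ 2 - 2 * m * Rabs (f x) + m ^ 2) 0 1).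
  { apply RInt01_ge0.
    - intros x Hx. apply continuous_plus_R; [|apply continuous_const].
      apply continuous_minus_R; [now apply Hsq|].
      apply continuous_mult_R; [apply continuous_const | now apply Habs].
    - intros x _. rewrite <- (pow2_abs (f x)).
      replace (Rabs (f x) ^ 2 - 2 * m * Rabs (f x) + m ^ 2) with ((Rabs (f x) - m) ^ 2) by ring.
      apply pow2_ge_0. }
  rewrite RInt_plus_R, RInt_minus_R, RInt_scal_R, RInt_const_R in Hvar.
  - fold m in Hvar. nra.
  - now apply ex_RInt01.
  - now apply ex_RInt01.
  - apply (ex_RInt_scal (V := R_NormedModule) (fun x => Rabs (f x))). now apply ex_RInt01.
  - apply (ex_RInt_minus (V := R_NormedModule) (fun x => f x ^ 2)); [now apply ex_RInt01|].
    apply (ex_RInt_scal (V := R_NormedModule) (fun x => Rabs (f x))). now apply ex_RInt01.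
  - apply ex_RInt_const.
Qed.

(* [(a + K n)^2 <= (1 + K) (a^2 + K n^2)] pointwise, then [n^2 <= RInt v^2] by Cauchy-Schwarz. *)
Lemma RInt01_sqr_le_of_pointwise (g v : R -> R) (K : R) :
  continuous_on01 g -> continuous_on01 v -> 0 <= K ->
  (forall y, 0 <= y <= 1 -> Rabs (g y) <= Rabs (v y) + K * RInt (fun x => Rabs (v x)) 0 1) ->
  RInt (fun y => g y ^ 2) 0 1 <= (1 + K) ^ 2 * RInt (fun y => v y ^ 2) 0 1.
Proof.
  intros Hg Hv HK Hpt.
  set (n := RInt (fun x => Rabs (v x)) 0 1) in *.
  assert (Hn : n ^ 2 <= RInt (fun y => v y ^ 2) 0 1) by now apply sqr_RInt01_abs_le.
  assert (Hn0 : 0 <= n) by (apply RInt01_ge0; [now apply continuous_on01_abs | intros; apply Rabs_pos]).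
  apply Rle_trans with (RInt (fun y => (1 + K) * (v y ^ 2 + K * n ^ 2)) 0 1).
  - apply RInt01_le; [now apply continuous_on01_sqr | |].
    + intros x Hx. apply continuous_mult_R; [apply continuous_const|].
      apply continuous_plus_R; [now apply continuous_on01_sqr | apply continuous_const].
    + intros y Hy. specialize (Hpt y Hy).
      rewrite <- (pow2_abs (g y)), <- (pow2_abs (v y)).
      pose proof (Rabs_pos (g y)). pose proof (Rabs_pos (v y)).
      assert (0 <= K * (Rabs (v y) - n) ^ 2) by (apply Rmult_le_pos; [exact HK | apply pow2_ge_0]).
      nra.
  - rewrite RInt_scal_R, RInt_plus_R, RInt_const_R.
    + nra.
    + apply ex_RInt01. now apply continuous_on01_sqr.
    + apply ex_RInt_const.
    + apply ex_RInt01. intros x Hx.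
      apply continuous_plus_R; [now apply continuous_on01_sqr | apply continuous_const].
Qed.

Lemma sqr_RInt01_le (d g : R -> R) (eps : R) :
  continuous_on01 (fun y => d (1 - y) * g y) -> continuous_on01 g ->
  (forall x, 0 <= x <= 1 -> Rabs (d x) <= eps) ->
  (RInt (fun y => d (1 - y) * g y) 0 1) ^ 2 <= eps ^ 2 * RInt (fun y => g y ^ 2) 0 1.
Proof.
  intros Hdg Hg Hd.
  assert (He : 0 <= eps) by (specialize (Hd 0 ltac:(lra)); pose proof (Rabs_pos (d 0)); lra).
  assert (Habs : Rabs (RInt (fun y => d (1 - y) * g y) 0 1) <= eps * RInt (fun y => Rabs (g y)) 0 1).
  { eapply Rle_trans; [apply abs_RInt_le; [lra | now apply ex_RInt01]|].
    rewrite <- RInt_scal_R by (now apply ex_RInt01, continuous_on01_abs).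
    apply RInt01_le; [now apply continuous_on01_abs | |].
    - intros x Hx. apply continuous_mult_R; [apply continuous_const | now apply continuous_on01_abs].
    - intros x Hx. rewrite Rabs_mult.
      apply Rmult_le_compat_r; [apply Rabs_pos | apply Hd; lra]. }
  assert (HCS := sqr_RInt01_abs_le g Hg).
  assert (0 <= RInt (fun y => Rabs (g y)) 0 1)
    by (apply RInt01_ge0; [now apply continuous_on01_abs | intros; apply Rabs_pos]).
  rewrite <- (pow2_abs (RInt _ 0 1)).
  apply Rle_trans with ((eps * RInt (fun y => Rabs (g y)) 0 1) ^ 2).
  - apply pow_incr. split; [apply Rabs_pos | exact Habs].
  - rewrite Rpow_mult_distr. apply Rmult_le_compat_l; [apply pow_le, He | exact HCS].
Qed.

Lemma RInt_le_RInt01 (g : R -> R) (y : R) :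
  (forall x, continuous g x) -> (forall x, 0 <= g x) -> 0 <= y <= 1 -> RInt g 0 y <= RInt g 0 1.
Proof.
  intros Hg Hpos Hy. rewrite (RInt_Chasles_R g 0 y 1) by exact Hg.
  enough (0 <= RInt g y 1) by lra.
  apply RInt_ge_0; [lra | now apply ex_RInt_of_continuous | intros; apply Hpos].
Qed.

Section Convolution.

Variables (b f : R -> R) (bb : R).
Hypotheses (b_cont : forall x, continuous b x) (f_cont : forall x, continuous f x).
Hypothesis b_bound : forall x, Rabs (b x) <= bb.

Lemma abs_conv_le (y : R) : 0 <= y -> Rabs (conv b f y) <= bb * RInt (fun r => Rabs (f r)) 0 y.
Proof.
  intros Hy. unfold conv.
  assert (Hc : forall x, continuous (fun r => b (y - r) * f r) x).
  { intros x. apply continuous_mult_R; [now apply continuous_comp_sub_l | apply f_cont]. }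
  eapply Rle_trans; [apply abs_RInt_le; [exact Hy | now apply ex_RInt_of_continuous]|].
  rewrite <- RInt_scal_R by (apply ex_RInt_of_continuous; intros; apply continuous_Rabs_comp, f_cont).
  apply RInt_le; [exact Hy | | |].
  - apply ex_RInt_of_continuous. intros; now apply continuous_Rabs_comp.
  - apply (ex_RInt_scal (V := R_NormedModule) (fun r => Rabs (f r))).
    apply ex_RInt_of_continuous. intros; apply continuous_Rabs_comp, f_cont.
  - intros x _. rewrite Rabs_mult. apply Rmult_le_compat_r; [apply Rabs_pos | apply b_bound].
Qed.

Lemma abs_bound_ge0 : 0 <= bb.
Proof. pose proof (b_bound 0). pose proof (Rabs_pos (b 0)). lra. Qed.

Lemma RInt01_sqr_sub_conv_le :
  RInt (fun y => (f y - conv b f y) ^ 2) 0 1 <= (1 + bb) ^ 2 * RInt (fun y => f y ^ 2) 0 1.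
Proof.
  apply RInt01_sqr_le_of_pointwise; [| intros x _; apply f_cont | apply abs_bound_ge0 |].
  - intros x _. apply continuous_minus_R; [apply f_cont | now apply continuous_conv].
  - intros y Hy. unfold Rminus. eapply Rle_trans; [apply Rabs_triang|]. rewrite Rabs_Ropp.
    apply Rplus_le_compat_l. eapply Rle_trans; [apply abs_conv_le; lra|].
    apply Rmult_le_compat_l; [apply abs_bound_ge0|].
    apply RInt_le_RInt01; [intros; apply continuous_Rabs_comp, f_cont | intros; apply Rabs_pos |].
    exact Hy.
Qed.

End Convolution.

Lemma Gronwall_RInt (w z : R -> R) (K : R) :
  (forall x, continuous w x) -> (forall x, continuous z x) -> 0 <= K -> (forall x, 0 <= z x) ->
  (forall x, 0 <= x -> w x <= z x + K * RInt w 0 x) ->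
  forall x, 0 <= x -> RInt w 0 x <= exp (K * x) * RInt z 0 x.
Proof.
  intros Hw Hz HK Hz0 Hwz x Hx.
  assert (Hez : forall s, continuous (fun s => exp (- K * s) * z s) s).
  { intros s. apply continuous_mult_R; [|apply Hz]. apply continuous_exp_comp.
    apply continuous_mult_R; [apply continuous_const | apply continuous_id]. }
  set (phi := fun x => exp (- K * x) * RInt w 0 x - RInt (fun s => exp (- K * s) * z s) 0 x).
  set (dphi := fun s =>
    - K * exp (- K * s) * RInt w 0 s + exp (- K * s) * w s - exp (- K * s) * z s).
  assert (Hphi : forall s, is_derive phi s (dphi s)).
  { intros s. apply (is_derive_minus (fun x => exp (- K * x) * RInt w 0 x)).
    - apply (Derive.is_derive_mult (fun x => exp (- K * x)) (fun x => RInt w 0 x));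
        [auto_derive; auto; ring | now apply is_derive_RInt_upper].
    - exact (is_derive_RInt_upper _ 0 s Hez). }
  assert (Hmono : phi x <= phi 0).
  { apply (nonincreasing_of_derive_nonpos phi dphi 0 x); try lra.
    - intros s _. now apply (continuous_of_derive phi dphi s).
    - intros s _. apply Hphi.
    - intros s Hs. unfold dphi. specialize (Hwz s ltac:(lra)). pose proof (exp_pos (- K * s)). nra. }
  unfold phi in Hmono. rewrite !RInt_point_R in Hmono.
  assert (Hle : RInt (fun s => exp (- K * s) * z s) 0 x <= RInt z 0 x).
  { apply RInt_le; [exact Hx | now apply ex_RInt_of_continuous | now apply ex_RInt_of_continuous |].
    intros s Hs. specialize (Hz0 s). rewrite <- (Rmult_1_l (z s)) at 2.
    apply Rmult_le_compat_r; [exact Hz0|]. rewrite <- exp_0. apply exp_le_exp. nra. }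
  assert (Hexp : exp (K * x) * exp (- K * x) = 1) by (rewrite <- exp_plus, <- exp_0; f_equal; ring).
  pose proof (exp_pos (K * x)).
  replace (RInt w 0 x) with (exp (K * x) * (exp (- K * x) * RInt w 0 x))
    by (rewrite <- Rmult_assoc, Hexp; ring).
  apply Rmult_le_compat_l; lra.
Qed.

Lemma RInt01_sqr_le_sub_conv (b f : R -> R) (bb : R) :
  (forall x, continuous b x) -> (forall x, continuous f x) -> (forall x, Rabs (b x) <= bb) ->
  RInt (fun y => f y ^ 2) 0 1 <= (1 + bb * exp bb) ^ 2 * RInt (fun y => (f y - conv b f y) ^ 2) 0 1.
Proof.
  intros Hb Hf Hbb.
  assert (Hbb0 := abs_bound_ge0 b bb Hbb).
  assert (Hv : forall x, continuous (fun y => f y - conv b f y) x).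
  { intros x. apply continuous_minus_R; [apply Hf | now apply continuous_conv]. }
  apply RInt01_sqr_le_of_pointwise; [intros x _; apply Hf | intros x _; apply Hv | |].
  - apply Rmult_le_pos; [exact Hbb0 | left; apply exp_pos].
  - intros y Hy.
    assert (Hpt : forall x, 0 <= x ->
              Rabs (f x) <= Rabs (f x - conv b f x) + bb * RInt (fun r => Rabs (f r)) 0 x).
    { intros x Hx. replace (f x) with ((f x - conv b f x) + conv b f x) at 1 by ring.
      eapply Rle_trans; [apply Rabs_triang|]. apply Rplus_le_compat_l. now apply abs_conv_le. }
    assert (Hgr : RInt (fun r => Rabs (f r)) 0 y
                  <= exp (bb * y) * RInt (fun r => Rabs (f r - conv b f r)) 0 y).
    { apply Gronwall_RInt; [intros; apply continuous_Rabs_comp, Hf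
                           | intros; apply continuous_Rabs_comp, Hv
                           | exact Hbb0 | intros; apply Rabs_pos | exact Hpt | lra]. }
    eapply Rle_trans; [apply Hpt; lra|]. apply Rplus_le_compat_l. rewrite Rmult_assoc.
    apply Rmult_le_compat_l; [exact Hbb0|]. eapply Rle_trans; [exact Hgr|].
    apply Rmult_le_compat.
    + left; apply exp_pos.
    + apply RInt_ge_0; [lra | apply ex_RInt_of_continuous; intros; now apply continuous_Rabs_comp |].
      intros; apply Rabs_pos.
    + apply exp_le_exp. nra.
    + apply RInt_le_RInt01; [intros; now apply continuous_Rabs_comp | intros; apply Rabs_pos | exact Hy].
Qed.

(** * Exponential decay under a delay inequality *)

Section DelayDecay.

Variables (y : R -> R) (A r : R).
Hypotheses (y_cont : forall x, continuous y x) (y_ge0 : forall x, 0 <= y x).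
Hypotheses (A_ge0 : 0 <= A) (r_pos : 0 < r) (gain_pos : 0 < 1 - A * (exp r - 1) / r).
Hypothesis y_delay : forall t, 0 <= t -> y (t + 1) <= A * RInt y t (t + 1).

Let P := exp r / (1 - A * (exp r - 1) / r).
Let b := A * P / r.

Lemma decay_const_pos : 0 < P.
Proof. apply Rdiv_lt_0_compat; [apply exp_pos | exact gain_pos]. Qed.

Lemma delay_weight_ge0 : 0 <= b.
Proof.
  apply Rmult_le_pos; [apply Rmult_le_pos; [lra | left; apply decay_const_pos]|].
  left; now apply Rinv_0_lt_compat.
Qed.

Lemma delay_weights_balance : (1 + b) * exp r - b = P.
Proof.
  assert (HPD : P * (1 - A * (exp r - 1) / r) = exp r).
  { unfold P. generalize gain_pos. generalize (1 - A * (exp r - 1) / r). intros D HD. field. lra. }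
  unfold b. transitivity (P * (1 - A * (exp r - 1) / r) + A * P / r * (exp r - 1)).
  - rewrite HPD. field. lra.
  - field. lra.
Qed.

Lemma continuous_exp_weighted (x : R) : continuous (fun s => exp (r * s) * y s) x.
Proof.
  apply continuous_mult_R; [|apply y_cont]. apply continuous_exp_comp.
  apply continuous_mult_R; [apply continuous_const | apply continuous_id].
Qed.

(* Window energy with weight [(1 + b) e^(r s) - b e^(r t)]; [b] is chosen so that the delay
   inequality makes the derivative nonpositive (see [delay_weights_balance] and [b r = A P]). *)
Let lyapunov (t : R) : R :=
  (1 + b) * RInt (fun s => exp (r * s) * y s) t (t + 1) - b * exp (r * t) * RInt y t (t + 1).

Let lyapunov_deriv (t : R) : R :=
  (1 + b) * (exp (r * (t + 1)) * y (t + 1) - exp (r * t) * y t)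
  - (b * (r * exp (r * t)) * RInt y t (t + 1) + b * exp (r * t) * (y (t + 1) - y t)).

Lemma is_derive_lyapunov (t : R) : is_derive lyapunov t (lyapunov_deriv t).
Proof.
  apply (is_derive_minus (fun t => (1 + b) * RInt (fun s => exp (r * s) * y s) t (t + 1))).
  - apply (is_derive_scal (fun t => RInt (fun s => exp (r * s) * y s) t (t + 1))).
    exact (is_derive_RInt_window _ t continuous_exp_weighted).
  - apply (Derive.is_derive_mult (fun t => b * exp (r * t)) (fun t => RInt y t (t + 1))).
    + auto_derive; auto; ring.
    + exact (is_derive_RInt_window y t y_cont).
Qed.

Lemma lyapunov_deriv_nonpos (t : R) : 0 <= t -> lyapunov_deriv t <= 0.
Proof.
  intros Ht. unfold lyapunov_deriv.
  replace (exp (r * (t + 1))) with (exp (r * t) * exp r) by (rewrite <- exp_plus; f_equal; ring).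
  assert (Hbr : b * r = A * P) by (unfold b; field; lra).
  replace ((1 + b) * (exp (r * t) * exp r * y (t + 1) - exp (r * t) * y t)
           - (b * (r * exp (r * t)) * RInt y t (t + 1) + b * exp (r * t) * (y (t + 1) - y t)))
    with (exp (r * t) * (((1 + b) * exp r - b) * y (t + 1) - b * r * RInt y t (t + 1) - y t))
    by ring.
  rewrite delay_weights_balance, Hbr.
  assert (P * y (t + 1) - A * P * RInt y t (t + 1) - y t <= 0).
  { pose proof decay_const_pos. pose proof (y_ge0 t). specialize (y_delay t Ht). nra. }
  pose proof (exp_pos (r * t)). nra.
Qed.

Lemma RInt_window_weighted_ge (t : R) :
  exp (r * t) * RInt y t (t + 1) <= RInt (fun s => exp (r * s) * y s) t (t + 1).
Proof.
  assert (Hc : forall x, continuous (fun s => exp (r * t) * y s) x)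
    by (intros; apply continuous_mult_R; [apply continuous_const | apply y_cont]).
  rewrite <- RInt_scal_R by now apply ex_RInt_of_continuous.
  apply RInt_le; [lra | now apply ex_RInt_of_continuous
                 | now apply ex_RInt_of_continuous, continuous_exp_weighted |].
  intros x Hx. apply Rmult_le_compat_r; [apply y_ge0 | apply exp_le_exp; nra].
Qed.

Lemma RInt_window0_weighted_le :
  RInt (fun s => exp (r * s) * y s) 0 1 <= exp r * RInt y 0 1.
Proof.
  assert (Hc : forall x, continuous (fun s => exp r * y s) x)
    by (intros; apply continuous_mult_R; [apply continuous_const | apply y_cont]).
  rewrite <- RInt_scal_R by now apply ex_RInt_of_continuous.
  apply RInt_le; [lra | now apply ex_RInt_of_continuous, continuous_exp_weighted
                 | now apply ex_RInt_of_continuous |].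
  intros x Hx. apply Rmult_le_compat_r; [apply y_ge0 | apply exp_le_exp; nra].
Qed.

Lemma delay_decay (t : R) : 0 <= t ->
  RInt y t (t + 1) <= exp r / (1 - A * (exp r - 1) / r) * exp (- r * t) * RInt y 0 1.
Proof.
  intros Ht. fold P.
  assert (Hmono : lyapunov t <= lyapunov 0).
  { apply (nonincreasing_of_derive_nonpos lyapunov lyapunov_deriv 0 t); try lra.
    - intros s _. apply (continuous_of_derive lyapunov lyapunov_deriv), is_derive_lyapunov.
    - intros s _. apply is_derive_lyapunov.
    - intros s Hs. apply lyapunov_deriv_nonpos. lra. }
  assert (Ht' : exp (r * t) * RInt y t (t + 1) <= lyapunov t).
  { unfold lyapunov. pose proof (RInt_window_weighted_ge t). pose proof delay_weight_ge0. nra. }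
  assert (H0 : lyapunov 0 <= P * RInt y 0 1).
  { unfold lyapunov. rewrite Rplus_0_l, Rmult_0_r, exp_0, <- delay_weights_balance.
    pose proof RInt_window0_weighted_le. pose proof delay_weight_ge0. nra. }
  assert (Hexp : exp (- r * t) * exp (r * t) = 1) by (rewrite <- exp_plus, <- exp_0; f_equal; ring).
  replace (RInt y t (t + 1)) with (exp (- r * t) * (exp (r * t) * RInt y t (t + 1)))
    by (rewrite <- Rmult_assoc, Hexp; ring).
  pose proof (exp_pos (- r * t)). nra.
Qed.

End DelayDecay.

(** * The decay-rate condition *)

Lemma concave_nonneg (F dF ddF : R -> R) (a b : R) :
  (forall x, is_derive F x (dF x)) -> (forall x, is_derive dF x (ddF x)) ->
  (forall x, a < x < b -> ddF x <= 0) -> 0 <= F a -> 0 <= F b ->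
  forall x, a <= x <= b -> 0 <= F x.
Proof.
  intros HF HdF Hdd Ha Hb x Hx.
  destruct (Req_dec x a) as [->|Hxa]; [exact Ha|].
  destruct (Req_dec x b) as [->|Hxb]; [exact Hb|].
  assert (HFc : forall z, continuous F z) by (intros z; apply (continuous_of_derive F dF), HF).
  destruct (MVT_open F dF a x) as [c1 [Hc1 E1]]; [lra | intros; apply HFc | intros; apply HF |].
  destruct (MVT_open F dF x b) as [c2 [Hc2 E2]]; [lra | intros; apply HFc | intros; apply HF |].
  assert (Hslopes : dF c2 <= dF c1).
  { apply (nonincreasing_of_derive_nonpos dF ddF a b); try lra.
    - intros z _. apply (continuous_of_derive dF ddF), HdF.
    - intros z _. apply HdF.
    - exact Hdd. }
  assert (Hid : F x * (b - a) = F a * (b - x) + F b * (x - a) + (dF c1 - dF c2) * ((x - a) * (b - x))).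
  { replace (F x * (b - a)) with (F x * (b - x) + F x * (x - a)) by ring.
    replace (F x) with (F a + dF c1 * (x - a)) at 1 by lra.
    replace (F x) with (F b - dF c2 * (b - x)) at 1 by lra. ring. }
  assert (0 <= (dF c1 - dF c2) * ((x - a) * (b - x))) by (apply Rmult_le_pos; nra).
  nra.
Qed.

(* Expanded form of [(c - x) (1 - e^-x) - x c (e^-x - e^-c)]: with [r = c - x] and
   [A = x c e^-c], its sign is the condition [exp r / (1 - A (exp r - 1) / r) <= exp c]. *)
Definition decay_margin (c x : R) : R :=
  (c + (c - 1) * x) * (1 - exp (- x)) - x * c * (1 - exp (- c)).

Definition decay_margin' (c x : R) : R :=
  (c - 1) * (1 - exp (- x)) + (c + (c - 1) * x) * exp (- x) - c * (1 - exp (- c)).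

Definition decay_margin'' (c x : R) : R := exp (- x) * (c - 2 - (c - 1) * x).

Lemma is_derive_decay_margin (c x : R) : is_derive (decay_margin c) x (decay_margin' c x).
Proof. unfold decay_margin, decay_margin'. auto_derive; auto. ring. Qed.

Lemma is_derive_decay_margin' (c x : R) : is_derive (decay_margin' c) x (decay_margin'' c x).
Proof. unfold decay_margin', decay_margin''. auto_derive; auto. ring. Qed.

(* The margin vanishes at [0] and [c], starts increasing, and is convex then concave. *)
Lemma decay_margin_nonneg (c x : R) : 0 < c -> 0 <= x <= c -> 0 <= decay_margin c x.
Proof.
  intros Hc Hx.
  assert (H0 : decay_margin c 0 = 0) by (unfold decay_margin; rewrite Ropp_0, exp_0; ring).
  assert (Hcc : decay_margin c c = 0) by (unfold decay_margin; ring).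
  assert (Hd0 : 0 < decay_margin' c 0).
  { unfold decay_margin'. rewrite Ropp_0, exp_0. pose proof (exp_pos (- c)). nra. }
  destruct (Rle_or_lt c 2) as [Hc2|Hc2].
  - apply (concave_nonneg _ _ _ 0 c (is_derive_decay_margin c) (is_derive_decay_margin' c)); try lra.
    intros z Hz. unfold decay_margin''. pose proof (exp_pos (- z)).
    assert (c - 2 - (c - 1) * z <= 0) by nra. nra.
  - set (x1 := (c - 2) / (c - 1)).
    assert (Hx1 : 0 < x1 < c).
    { unfold x1. split; [apply Rdiv_lt_0_compat; lra|].
      apply Rmult_lt_reg_r with (c - 1); [lra|]. unfold Rdiv.
      rewrite Rmult_assoc, Rinv_l by lra. nra. }
    assert (Hsign : forall z, c - 2 - (c - 1) * z = (c - 1) * (x1 - z))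
      by (intros; unfold x1; field; lra).
    assert (Hconvex : forall z, 0 <= z <= x1 -> 0 <= decay_margin c z).
    { intros z Hz. rewrite <- H0.
      apply (nondecreasing_of_derive_nonneg _ (decay_margin' c) 0 x1); try lra.
      - intros w _. apply (continuous_of_derive _ (decay_margin' c)), is_derive_decay_margin.
      - intros w _. apply is_derive_decay_margin.
      - intros w Hw. enough (decay_margin' c 0 <= decay_margin' c w) by lra.
        apply (nondecreasing_of_derive_nonneg _ (decay_margin'' c) 0 x1); try lra.
        + intros v _. apply (continuous_of_derive _ (decay_margin'' c)), is_derive_decay_margin'.
        + intros v _. apply is_derive_decay_margin'.
        + intros v Hv. unfold decay_margin''. rewrite Hsign. pose proof (exp_pos (- v)).
          apply Rmult_le_pos; [lra | apply Rmult_le_pos; lra]. }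
    destruct (Rle_or_lt x x1) as [Hxx|Hxx]; [apply Hconvex; lra|].
    apply (concave_nonneg _ _ _ x1 c (is_derive_decay_margin c) (is_derive_decay_margin' c)); try lra.
    + intros z Hz. unfold decay_margin''. rewrite Hsign. pose proof (exp_pos (- z)).
      assert ((c - 1) * (x1 - z) <= 0) by nra. nra.
    + apply Hconvex; lra.
Qed.

Lemma decay_rate_conditions (c A : R) : 0 < c -> 0 < A -> A < c ^ 2 * exp (- c) ->
  let r := c - exp c / c * A in
  0 < r /\ 0 < 1 - A * (exp r - 1) / r /\ exp r / (1 - A * (exp r - 1) / r) <= exp c.
Proof.
  intros Hc HA HAc r.
  set (x := exp c / c * A) in r.
  assert (Hec : exp c * exp (- c) = 1) by (rewrite <- exp_plus, <- exp_0; f_equal; ring).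
  pose proof (exp_pos c). pose proof (exp_pos (- c)). pose proof (exp_pos (- x)).
  assert (HA' : A = x * c * exp (- c)).
  { unfold x. transitivity (A * (exp c * exp (- c))); [rewrite Hec; ring | field; lra]. }
  assert (Hx : 0 < x < c).
  { split; [unfold x; apply Rmult_lt_0_compat; [apply Rdiv_lt_0_compat|]; lra|].
    rewrite HA' in HAc. apply Rmult_lt_reg_r with (c * exp (- c)); [nra|]. nra. }
  assert (Hr : exp r = exp c * exp (- x)) by (unfold r; rewrite <- exp_plus; f_equal; ring).
  assert (HD : 1 - A * (exp r - 1) / r = 1 - x * c * (exp (- x) - exp (- c)) / (c - x)).
  { rewrite Hr, HA'. unfold r. do 2 f_equal.
    transitivity (x * c * ((exp c * exp (- c)) * exp (- x) - exp (- c))); [ring | rewrite Hec; ring]. }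
  assert (Hmargin : exp (- x) <= 1 - x * c * (exp (- x) - exp (- c)) / (c - x)).
  { pose proof (decay_margin_nonneg c x Hc ltac:(lra)) as Hm. unfold decay_margin in Hm.
    apply Rmult_le_reg_r with (c - x); [lra|].
    replace ((1 - x * c * (exp (- x) - exp (- c)) / (c - x)) * (c - x))
      with ((c - x) - x * c * (exp (- x) - exp (- c))) by (field; lra).
    nra. }
  split; [unfold r; lra|]. rewrite HD. split; [lra|].
  rewrite Hr. apply Rle_trans with (exp c * exp (- x) / exp (- x)).
  - unfold Rdiv. apply Rmult_le_compat_l; [nra|]. apply Rinv_le_contravar; lra.
  - right. field. lra.
Qed.

(** * Energy decay of the closed loop *)

Section ClosedLoopEnergy.

Variables (beta k khat : R -> R) (u : R -> R -> R) (bb eps : R).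
Hypothesis beta_lip : lipschitz_on01 beta.
Hypothesis beta_bound : forall x, 0 <= x <= 1 -> Rabs (beta x) <= bb.
Hypotheses (k_kernel : is_backstepping_kernel beta k) (khat_cont : continuous_on01 khat).
Hypothesis k_khat_close : forall x, 0 <= x <= 1 -> Rabs (k x - khat x) <= eps.
Hypothesis u_sol : is_closed_loop_solution beta khat u.

Let beta_ext (x : R) : R := beta (clamp01 x).
Let k_ext (x : R) : R := k (clamp01 x).

Lemma continuous_beta_ext (x : R) : continuous beta_ext x.
Proof. now apply lipschitz_on01_clamp01_continuous. Qed.

Lemma beta_ext_eq (x : R) : 0 <= x <= 1 -> beta_ext x = beta x.
Proof. intros Hx. unfold beta_ext. now rewrite clamp01_id. Qed.

Lemma beta_ext_bound (x : R) : Rabs (beta_ext x) <= bb.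
Proof. apply beta_bound, clamp01_in. Qed.

Lemma continuous_k_ext (x : R) : continuous k_ext x.
Proof. exact (continuous_clamp01_comp k (proj1 k_kernel) x). Qed.

Lemma k_ext_eq (x : R) : 0 <= x <= 1 -> k_ext x = k x.
Proof. intros Hx. unfold k_ext. now rewrite clamp01_id. Qed.

Lemma continuous_left_trace_sqr (s : R) : continuous (fun s => left_trace u s ^ 2) s.
Proof. apply continuous_Rsqr_comp, (continuous_left_trace beta khat), u_sol. Qed.

Lemma RInt01_sqr_closed_loop (t : R) : 0 <= t ->
  RInt (fun x => u x t ^ 2) 0 1
  = RInt (fun x => (left_trace u (t + x) - conv beta_ext (fun s => left_trace u (t + s)) x) ^ 2) 0 1.
Proof.
  intros Ht. apply RInt_ext. rewrite Rmin_left, Rmax_right by lra. intros x Hx.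
  rewrite (closed_loop_characteristic beta khat beta_ext u)
    by (auto using continuous_beta_ext, beta_ext_eq; lra).
  reflexivity.
Qed.

Lemma energy_le_window (t : R) : 0 <= t ->
  RInt (fun x => u x t ^ 2) 0 1 <= (1 + bb) ^ 2 * RInt (fun s => left_trace u s ^ 2) t (t + 1).
Proof.
  intros Ht. rewrite RInt01_sqr_closed_loop, <- RInt_shift by (auto using continuous_left_trace_sqr).
  apply RInt01_sqr_sub_conv_le; [apply continuous_beta_ext | | apply beta_ext_bound].
  intros s. apply (continuous_left_trace_shift beta khat), u_sol.
Qed.

Lemma window0_le_energy :
  RInt (fun s => left_trace u s ^ 2) 0 1 <= (1 + bb * exp bb) ^ 2 * RInt (fun x => u x 0 ^ 2) 0 1.
Proof.
  rewrite (RInt01_sqr_closed_loop 0), <- (Rplus_0_l 1) at 1 by lra.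
  rewrite <- RInt_shift by (auto using continuous_left_trace_sqr).
  apply RInt01_sqr_le_sub_conv; [apply continuous_beta_ext | | apply beta_ext_bound].
  intros s. apply (continuous_left_trace_shift beta khat), u_sol.
Qed.

Lemma left_trace_delay (t : R) : 0 <= t ->
  left_trace u (t + 1) ^ 2 <= eps ^ 2 * (1 + bb) ^ 2 * RInt (fun s => left_trace u s ^ 2) t (t + 1).
Proof.
  intros Ht.
  rewrite (closed_loop_delay_identity beta k khat beta_ext k_ext u) by
    (auto using continuous_beta_ext, beta_ext_eq, continuous_k_ext, k_ext_eq).
  eapply Rle_trans; [apply (sqr_RInt01_le (fun x => khat x - k x) (fun y => u y t) eps)|].
  - intros x Hx. apply continuous_mult_R; [|now apply (continuous_u_slice beta khat)].
    apply (continuous_comp (fun y => 1 - y) (fun x => khat x - k x)).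
    + apply continuous_minus_R; [apply continuous_const | apply continuous_id].
    + apply continuous_minus_R; [apply khat_cont; lra | apply k_kernel; lra].
  - intros x Hx. now apply (continuous_u_slice beta khat).
  - intros x Hx. rewrite Rabs_minus_sym. now apply k_khat_close.
  - rewrite Rmult_assoc. apply Rmult_le_compat_l; [apply pow2_ge_0|]. now apply energy_le_window.
Qed.

Lemma closed_loop_energy_decay (c A r : R) :
  eps ^ 2 * (1 + bb) ^ 2 <= A -> 0 < r -> 0 < 1 - A * (exp r - 1) / r ->
  exp r / (1 - A * (exp r - 1) / r) <= exp c ->
  forall t, 0 <= t ->
  RInt (fun x => u x t ^ 2) 0 1
  <= ((1 + bb) * (1 + bb * exp bb) * exp (c / 2)) ^ 2 * exp (- r * t) * RInt (fun x => u x 0 ^ 2) 0 1.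
Proof.
  intros HA Hr HD HP t Ht.
  set (y := fun s => left_trace u s ^ 2).
  assert (Hy0 : forall s, 0 <= y s) by (intros; apply pow2_ge_0).
  assert (HA0 : 0 <= A) by (eapply Rle_trans; [|exact HA]; apply Rmult_le_pos; apply pow2_ge_0).
  assert (Hdecay := delay_decay y A r continuous_left_trace_sqr Hy0 HA0 Hr HD).
  assert (Hwin : RInt y t (t + 1) <= exp c * exp (- r * t) * RInt y 0 1).
  { eapply Rle_trans; [apply Hdecay; auto|].
    - intros s Hs. eapply Rle_trans; [apply left_trace_delay, Hs|].
      apply Rmult_le_compat_r; [|exact HA].
      apply RInt_ge_0; [lra | apply ex_RInt_of_continuous, continuous_left_trace_sqr | auto].
    - apply Rmult_le_compat_r; [apply RInt_ge_0; [lra | apply ex_RInt_of_continuous,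
        continuous_left_trace_sqr | auto]|].
      apply Rmult_le_compat_r; [left; apply exp_pos | exact HP]. }
  eapply Rle_trans; [apply energy_le_window, Ht|].
  rewrite !Rpow_mult_distr, exp_half_sq.
  apply Rle_trans with
    ((1 + bb) ^ 2 * (exp c * exp (- r * t) * ((1 + bb * exp bb) ^ 2 * RInt (fun x => u x 0 ^ 2) 0 1))).
  - apply Rmult_le_compat_l; [apply pow2_ge_0|]. eapply Rle_trans; [exact Hwin|].
    apply Rmult_le_compat_l; [pose proof (exp_pos c); pose proof (exp_pos (- r * t)); nra|].
    apply window0_le_energy.
  - right. ring.
Qed.

End ClosedLoopEnergy.

Lemma delay_gain_bound (B c eps : R) : 0 < B -> 0 < eps -> eps < c * exp (- c / 2) / (1 + B) ->
  0 < eps ^ 2 * (1 + B) ^ 2 < c ^ 2 * exp (- c).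
Proof.
  intros HB He Hlt.
  assert (H1 : eps * (1 + B) < c * exp (- c / 2)).
  { apply Rmult_lt_reg_r with (/ (1 + B)); [apply Rinv_0_lt_compat; lra|].
    rewrite Rmult_assoc, Rinv_r, Rmult_1_r by lra. exact Hlt. }
  assert (H0 : 0 < eps * (1 + B)) by (apply Rmult_lt_0_compat; lra).
  rewrite <- Rpow_mult_distr. split; [now apply pow_lt|].
  replace (c ^ 2 * exp (- c)) with ((c * exp (- c / 2)) ^ 2)
    by (rewrite Rpow_mult_distr, exp_half_sq; reflexivity).
  simpl. nra.
Qed.

Lemma L2norm_le_of_energy (f g : R -> R) (K K' r t : R) : 0 <= K <= K' ->
  RInt (fun x => f x ^ 2) 0 1 <= K ^ 2 * exp (- r * t) * RInt (fun x => g x ^ 2) 0 1 ->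
  L2norm f <= K' * exp (- r * t / 2) * L2norm g.
Proof.
  intros HK Hle. unfold L2norm.
  apply Rle_trans with (K * exp (- r * t / 2) * sqrt (RInt (fun x => g x ^ 2) 0 1)).
  - rewrite <- (sqrt_pow2 (K * exp (- r * t / 2))) by (pose proof (exp_pos (- r * t / 2)); nra).
    rewrite <- sqrt_mult_alt by apply pow2_ge_0.
    apply sqrt_le_1_alt. rewrite Rpow_mult_distr, exp_half_sq. exact Hle.
  - apply Rmult_le_compat_r; [apply sqrt_pos|].
    apply Rmult_le_compat_r; [left; apply exp_pos | lra].
Qed.

(* The estimate yields the factor [1 + bb]; the constant [M] of the statement has the larger
   factor [1 + (bb + (1 + bb) eps) e^((1 + bb) eps)]. *)
Lemma overshoot_bound (bb eps c : R) : 0 <= bb -> 0 <= eps ->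
  (1 + bb) * (1 + bb * exp bb) * exp (c / 2)
  <= (1 + (bb + (1 + bb) * eps) * exp ((1 + bb) * eps)) * (1 + bb * exp bb) * exp (c / 2).
Proof.
  intros Hbb He.
  assert (0 <= (1 + bb) * eps) by (apply Rmult_le_pos; lra).
  assert (Hexp : 1 <= exp ((1 + bb) * eps)) by (rewrite <- exp_0 at 1; now apply exp_le_exp).
  assert (bb * 1 <= (bb + (1 + bb) * eps) * exp ((1 + bb) * eps)) by (apply Rmult_le_compat; lra).
  pose proof (exp_pos bb). pose proof (exp_pos (c / 2)).
  apply Rmult_le_compat_r; [lra|]. apply Rmult_le_compat_r; nra.
Qed.

Theorem theorem2 (B c : R) (beta k khat : R -> R) (betabar eps : R) :
  0 < B -> 0 < c ->
  lipschitz_on01 beta ->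
  is_supnorm01 beta betabar ->
  betabar <= B ->
  is_backstepping_kernel beta k ->
  (forall x, 0 <= x <= 1 -> continuous khat x) ->
  0 < eps -> eps < c * exp (- c / 2) / (1 + B) ->
  (forall x, 0 <= x <= 1 -> Rabs (k x - khat x) < eps) ->
  let cstar := c - exp c / c * eps ^ 2 * (1 + B) ^ 2 in
  let M := (1 + (betabar + (1 + betabar) * eps) * exp ((1 + betabar) * eps))
           * (1 + betabar * exp betabar) * exp (c / 2) in
  0 < cstar /\
  forall u : R -> R -> R,
    is_closed_loop_solution beta khat u ->
    forall t, 0 <= t ->
      L2norm (fun x => u x t) <= M * exp (- cstar * t / 2) * L2norm (fun x => u x 0).
Proof.
  intros HB Hc Hlip [Hsup _] HbB Hker Hkh He0 He1 Hclose cstar M.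
  assert (Hbb : 0 <= betabar) by (pose proof (Hsup 0 ltac:(lra)); pose proof (Rabs_pos (beta 0)); lra).
  destruct (delay_gain_bound B c eps HB He0 He1) as [HA0 HAc].
  destruct (decay_rate_conditions c _ Hc HA0 HAc) as [Hr [HD HP]].
  assert (Hcs : cstar = c - exp c / c * (eps ^ 2 * (1 + B) ^ 2)) by (unfold cstar; ring).
  rewrite Hcs. split; [exact Hr|].
  intros u Hsol t Ht.
  apply (L2norm_le_of_energy _ _ ((1 + betabar) * (1 + betabar * exp betabar) * exp (c / 2))).
  - split; [|apply overshoot_bound; lra].
    pose proof (exp_pos betabar). pose proof (exp_pos (c / 2)).
    repeat apply Rmult_le_pos; nra.
  - apply (closed_loop_energy_decay beta k khat u betabar eps Hlip Hsup Hker Hkh)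
      with (A := eps ^ 2 * (1 + B) ^ 2); auto.
    + intros x Hx. left. apply Hclose, Hx.
    + apply Rmult_le_compat_l; [apply pow2_ge_0 | apply pow_incr; lra].
Qed.
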